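(* Let $n\ge 1$, $i\in\{1,\ldots,n-1\}$, and let $C$ be a set of transpositions in $S_n$ with $s_i\in C$. Put $D=C\cap s_iCs_i$. Then $\partial_i$ is defined on $H_C$, and $\partial_i(H_C)\subseteq H_D$.
   Context: Let $S_n$ be the symmetric group on $\{1,\ldots,n\}$ with $(vw)(j)=v(w(j))$, and $s_i=(i\leftrightarrow i+1)$. Let $H=\mathrm{Fun}(S_n,\mathbb{C}[t_1,\ldots,t_n])$ with pointwise operations. The star action of $w\in S_n$ on $f\in H$ is $(f*w)(v)=f(vw^{-1})$. Let $x_i\in H$ be the function $v\mapsto t_{v(i)}$. For a transposition $\tau=(i\leftrightarrow k)$, $f\in H$ satisfies condition $\tau$ if $f-f*\tau=(x_i-x_k)g$ for some $g\in H$; these form a subring $H_\tau$, and for a set $C$ of transpositions $H_C=\bigcap_{\tau\in C}H_\tau$ (with $H_\varnothing=H$). For $f\in H_{s_i}$, $\partial_i(f)$ is the unique $g\in H$ with $f-f*s_i=(x_i-x_{i+1})g$; $\partial_i$ is defined exactly on $H_{s_i}$. *)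

From HB Require Import structures.
From mathcomp Require Import all_boot all_algebra all_fingroup.
From mathcomp Require Import reals complex.
From mathcomp Require Import mpoly.

Set Implicit Arguments.
Unset Strict Implicit.
Unset Printing Implicit Defensive.

Import GRing.Theory.
Local Open Scope ring_scope.

Section HDefs.
Variable R : realType.
Variable n : nat.

(* the coefficient ring C[t_1,...,t_n]; variables indexed 0..n-1 *)
Definition Cpoly := {mpoly (complex R)[n]}.

Definition H := {perm 'I_n} -> Cpoly.

(* composition with the paper's convention (v w)(j) = v (w j);
   note mathcomp's product is (s * t) x = t (s x), so v o w = w * v *)
Definition pcomp (v w : {perm 'I_n}) : {perm 'I_n} := (w * v)%g.

Definition star (f : H) (w : {perm 'I_n}) : H := fun v => f (pcomp v w^-1%g).

Definition xfun (i : 'I_n) : H := fun v => 'X_(v i).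

Definition cond_pair (i k : 'I_n) (f : H) : Prop :=
  exists g : H, forall v, f v - star f (tperm i k) v = (xfun i v - xfun k v) * g v.

Definition is_transposition (tau : {perm 'I_n}) : Prop :=
  exists i k : 'I_n, i != k /\ tau = tperm i k.

Definition in_Htau (tau : {perm 'I_n}) (f : H) : Prop :=
  exists i k : 'I_n, [/\ i != k, tau = tperm i k & cond_pair i k f].

Definition in_HC (C : {set {perm 'I_n}}) (f : H) : Prop :=
  forall tau, tau \in C -> in_Htau tau f.

Definition conj_set (s : {perm 'I_n}) (C : {set {perm 'I_n}}) : {set {perm 'I_n}} :=
  [set pcomp (pcomp s c) s | c in C].

(* g = partial_i f, for the simple transposition s_i = (i <-> j), j = i+1:
   f - f * s_i = (x_i - x_j) g  (g is unique when it exists) *)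
Definition is_divdiff (i j : 'I_n) (f g : H) : Prop :=
  forall v, f v - star f (tperm i j) v = (xfun i v - xfun j v) * g v.

End HDefs.

(* Fix v, write s = s_i and tau = (a b), and let sigma substitute t_(v b) for
   t_(v a). Its kernel is the ideal generated by t_(v a) - t_(v b), so condition
   tau at v says sigma (f v - f (v tau)) = 0. If tau = s, then g = d_i f is
   s-invariant. Otherwise sigma (t_(v i) - t_(v j)) != 0, and sigma maps the
   defining identities
     f w - f (w s) = (t_(w i) - t_(w j)) g w,   w = v and w = v tau,
   to equations with equal left-hand sides (by condition tau at v and condition
   s tau s, which lies in C, at v s) and equal factors sigma (t_(w i) - t_(w j));
   cancelling in C[t] gives sigma (g v) = sigma (g (v tau)). *)
From HB Require Import structures.
From mathcomp Require Import all_boot all_algebra all_fingroup.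
From mathcomp Require Import reals complex.
From mathcomp Require Import mpoly.
From mathcomp Require Import ring.

Set Implicit Arguments.
Unset Strict Implicit.
Unset Printing Implicit Defensive.

Import GRing.Theory.
Local Open Scope ring_scope.

Definition rename (T : eqType) (x y k : T) : T := if k == x then y else k.

Lemma rename_tperm (T : finType) (x y k : T) :
  rename x y (tperm x y k) = rename x y k.
Proof. by rewrite /rename; case: tpermP => [->|->|]; rewrite ?eqxx //; case: eqP. Qed.

Lemma rename_eq_tperm (T : finType) (x y k l : T) :
  k != l -> rename x y k = rename x y l -> tperm x y = tperm k l.
Proof.
move=> nkl; rewrite /rename; case: eqP => [ekx|_]; case: eqP => [elx|_].
- by rewrite ekx elx eqxx in nkl.
- by move=> ->; rewrite ekx.
- by move=> ->; rewrite elx tpermC.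
- by move=> ekl; rewrite ekl eqxx in nkl.
Qed.

Section RenameVariable.
Variables (R : comNzRingType) (n : nat).
Implicit Types (x y k l : 'I_n) (p : {mpoly R[n]}).

(* Locked: otherwise unification with products of polynomials unfolds
   [comp_mpoly] and does not terminate in practice. *)
Fact mrename_key : unit. Proof. by []. Qed.
Definition mrename x y : {mpoly R[n]} -> {mpoly R[n]} :=
  locked_with mrename_key (comp_mpoly [tuple 'X_(rename x y k) | k < n]).

Lemma mrenameD x y : {morph mrename x y : p q / p + q}.
Proof. by rewrite /mrename unlock; apply: raddfD. Qed.

Lemma mrenameB x y : {morph mrename x y : p q / p - q}.
Proof. by rewrite /mrename unlock; apply: raddfB. Qed.

Lemma mrenameM x y : {morph mrename x y : p q / p * q}.
Proof. by rewrite /mrename unlock; apply: rmorphM. Qed.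

Lemma mrenameX x y k : mrename x y 'X_k = 'X_(rename x y k).
Proof. by rewrite /mrename unlock comp_mpolyXU -tnth_nth tnth_mktuple. Qed.

Lemma mrenameXX x y : mrename x y ('X_x - 'X_y) = 0.
Proof.
by rewrite mrenameB !mrenameX /rename eqxx; case: eqP => [->|_]; rewrite subrr.
Qed.

Lemma mrename_subr_dvd x y p : exists q, p - mrename x y p = ('X_x - 'X_y) * q.
Proof.
pose I p := exists q, p - mrename x y p = ('X_x - 'X_y) * q.
have IC c : I c%:MP by exists 0; rewrite /mrename unlock comp_mpolyC subrr mulr0.
have I1 : I 1 by rewrite -mpolyC1.
have ID p1 p2 : I p1 -> I p2 -> I (p1 + p2).
  move=> [q1 e1] [q2 e2]; exists (q1 + q2).
  by rewrite mrenameD opprD addrACA e1 e2 mulrDr.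
have IM p1 p2 : I p1 -> I p2 -> I (p1 * p2).
  move=> [q1 e1] [q2 e2]; exists (q1 * p2 + mrename x y p1 * q2).
  rewrite mrenameM mulrDr mulrA -e1 mulrCA -e2; ring.
have IX k : I 'X_k.
  rewrite /I mrenameX /rename; case: eqP => [->|_].
    by exists 1; rewrite mulr1.
  by exists 0; rewrite subrr mulr0.
rewrite [p]mpolyE; apply: (big_ind I) => [|//|m _]; first by rewrite -mpolyC0.
rewrite -mul_mpolyC mpolyXE_id; apply: (IM); first exact: IC.
apply: (big_ind I) => // k _; elim: (m k) => [|e IHe]; first by rewrite expr0.
by rewrite exprS; apply: (IM).
Qed.

Lemma mrename_eq0P x y p :
  mrename x y p = 0 <-> exists q, p = ('X_x - 'X_y) * q.
Proof.
split=> [p0 | [q ->]]; last by rewrite mrenameM mrenameXX mul0r.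
by have [q eq] := mrename_subr_dvd x y p; exists q; rewrite -eq p0 subr0.
Qed.

Lemma mpolyXB_eq0 k l : ('X_k - 'X_l == 0 :> {mpoly R[n]}) = (k == l).
Proof.
apply/idP/eqP => [|->]; last by rewrite subrr.
apply: contraTeq => nkl; apply/eqP => /(congr1 (mcoeff U_(k))).
rewrite mcoeffB !mcoeffXU eqxx eq_sym (negbTE nkl) subr0 mcoeff0.
by apply/eqP; rewrite oner_eq0.
Qed.

End RenameVariable.

Lemma tperm_eq_pair (T : finType) (a b c d : T) :
  c != d -> tperm a b = tperm c d -> (c = a /\ d = b) \/ (c = b /\ d = a).
Proof.
move=> ncd /(congr1 (fun t : {perm T} => t c)); rewrite /= tpermL.
by case: tpermP => [-> ->|-> ->|_ _ ecd]; [left|right|rewrite ecd eqxx in ncd].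
Qed.

Lemma tperm_conj (T : finType) (x y a b : T) :
  tperm (tperm x y a) (tperm x y b) = (tperm x y * tperm a b * tperm x y)%g.
Proof. by rewrite -tpermJ conjgE tpermV mulgA. Qed.

Section DividedDifference.
Variables (R : realType) (n : nat).
Implicit Types (f g : H R n) (i j a b : 'I_n) (v : {perm 'I_n}).

Lemma star_tperm f a b v : star f (tperm a b) v = f (tperm a b * v)%g.
Proof. by rewrite /star /pcomp tpermV. Qed.

Lemma cond_pairP a b f :
  cond_pair a b f <->
  forall v, mrename (v a) (v b) (f v - f (tperm a b * v)%g) = 0.
Proof.
split=> [[g hg] v | hf].
  by apply/mrename_eq0P; exists (g v); rewrite -star_tperm hg.
have hq v : exists q, f v - f (tperm a b * v)%g == ('X_(v a) - 'X_(v b)) * q.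
  by have [q ->] := (mrename_eq0P _ _ _).1 (hf v); exists q.
exists (fun v => xchoose (hq v)) => v.
by rewrite star_tperm; apply/eqP/(xchooseP (hq v)).
Qed.

Lemma cond_pairC a b f : cond_pair a b f -> cond_pair b a f.
Proof.
case=> g hg; exists (fun v => - g v) => v.
by rewrite tpermC hg /xfun mulrN -mulNr opprB.
Qed.

Lemma in_Htau_cond_pair a b f : in_Htau (tperm a b) f -> cond_pair a b f.
Proof.
case=> c [d [ncd /(tperm_eq_pair ncd) [[-> ->]|[-> ->]] hf]] //.
exact: cond_pairC.
Qed.

Lemma divdiff_tperm_invariant i j f g v :
  i != j -> is_divdiff i j f g -> g (tperm i j * v)%g = g v.
Proof.
move=> nij hg; set s := tperm i j.
have hv := hg v; have hsv := hg (s * v)%g.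
rewrite star_tperm /xfun in hv; rewrite star_tperm /xfun mulgA tperm2 mul1g in hsv.
rewrite !permM tpermL tpermR in hsv.
have : ('X_(v i) - 'X_(v j)) * (g v - g (s * v)%g) = 0.
  have -> : ('X_(v i) - 'X_(v j)) * (g v - g (s * v)%g) =
    ('X_(v i) - 'X_(v j)) * g v + ('X_(v j) - 'X_(v i)) * g (s * v)%g by ring.
  by rewrite -hv -hsv; ring.
move/eqP; rewrite mulf_eq0 mpolyXB_eq0 (inj_eq perm_inj) (negbTE nij) /= subr_eq0.
by move/eqP.
Qed.

Lemma cond_pair_divdiff i j a b f g :
  i != j -> is_divdiff i j f g ->
  cond_pair a b f -> cond_pair (tperm i j a) (tperm i j b) f -> cond_pair a b g.
Proof.
move=> nij hg hab hsab; apply/cond_pairP => v.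
set s := tperm i j; set tau := tperm a b.
have [tau_s | tau_ns] := eqVneq tau s.
  apply/mrename_eq0P; exists 0.
  by rewrite tau_s (divdiff_tperm_invariant _ nij hg) subrr mulr0.
set x := v a; set y := v b.
have hdiv w : f w - f (s * w)%g = ('X_(w i) - 'X_(w j)) * g w.
  by rewrite -star_tperm; apply: hg.
have f_tau : mrename x y (f v - f (tau * v)%g) = 0 by apply: (cond_pairP _ _ _).1.
have f_stau : mrename x y (f (s * v)%g - f (s * (tau * v))%g) = 0.
  have := (cond_pairP _ _ _).1 hsab (s * v)%g.
  by rewrite !permM !tpermK tperm_conj -!mulgA (mulgA s s) tperm2 mul1g.
have rename_tau k : rename x y ((tau * v)%g k) = rename x y (v k).
  by rewrite permM -permJ tpermJ rename_tperm.
pose d := mrename x y ('X_(v i) - 'X_(v j) : Cpoly R n).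
have d_neq0 : d != 0.
  rewrite /d mrenameB !mrenameX mpolyXB_eq0; apply: contra tau_ns => /eqP e.
  apply/eqP/(@conjg_inj _ v); rewrite !tpermJ.
  by apply: rename_eq_tperm e; rewrite (inj_eq perm_inj).
have g_v : mrename x y (f v - f (s * v)%g) = d * mrename x y (g v).
  by rewrite /d (hdiv v) mrenameM.
have d_tau : mrename x y ('X_((tau * v)%g i) - 'X_((tau * v)%g j) : Cpoly R n) = d.
  by rewrite /d !mrenameB !mrenameX !rename_tau.
have g_tau : mrename x y (f (tau * v)%g - f (s * (tau * v))%g) =
             d * mrename x y (g (tau * v)%g).
  by rewrite (hdiv (tau * v)%g) mrenameM d_tau.
rewrite !mrenameB in f_tau f_stau g_v g_tau.
rewrite (subr0_eq f_tau) (subr0_eq f_stau) g_tau in g_v.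
by rewrite mrenameB (mulfI d_neq0 g_v) subrr.
Qed.

End DividedDifference.

Theorem corollary1 (R : realType) (n : nat) (hn : (1 <= n)%N)
    (i j : 'I_n) (hij : val j = (val i).+1)
    (C : {set {perm 'I_n}})
    (hC : forall tau, tau \in C -> is_transposition tau)
    (hsC : tperm i j \in C) :
  let D := C :&: conj_set (tperm i j) C in
  forall f : H R n, in_HC C f ->
    in_Htau (tperm i j) f /\
    (forall g : H R n, is_divdiff i j f g -> in_HC D g).
Proof.
move=> D f hf; split=> [|g hg tau]; first exact: hf.
rewrite inE => /andP [tauC /imsetP [c cC tauE]].
have nij : i != j by apply/eqP => eij; move: hij; rewrite eij; exact: n_Sn.
have [a [b [nab tau_ab hab]]] := hf _ tauC.
exists a, b; split => //; apply: cond_pair_divdiff nij hg hab _.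
apply: in_Htau_cond_pair.
have -> : tperm (tperm i j a) (tperm i j b) = c.
  by rewrite tperm_conj -tau_ab tauE /pcomp !mulgA tperm2 mul1g -mulgA tperm2 mulg1.
exact: hf.
Qed.
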